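(* Let $\mathcal F$ be a compact subset of $C(\mathbf X)$. There exists a strategy for Predictor that produces predictions with $|\mu_n|\le1$ and guarantees, for all $N=1,2,\dots$, all $F\in\mathcal F$ and all moves of Reality, $$\sum_{n=1}^N(y_n-\mu_n)^2\le\sum_{n=1}^N(y_n-F(x_n))^2+C\inf_{\epsilon\in(0,1/2]}\left(\mathcal H_\epsilon(\mathcal F)+\log\log\frac1\epsilon+\epsilon N+1\right),$$ where $C$ is a universal constant.
   Context: Protocol: $\mathbf X$ is a nonempty topological space (the signal space). At each round $n=1,2,\dots$ Reality announces $x_n\in\mathbf X$, Predictor announces $\mu_n\in\mathbb R$, Reality announces $y_n\in[-1,1]$. A strategy for Predictor maps each history $(x_1,y_1,\dots,x_{n-1},y_{n-1},x_n)$ to $\mu_n$; guarantees must hold for all (possibly adaptive) moves of Reality. $C(\mathbf X)$ is the Banach space of bounded continuous real-valued functions on $\mathbf X$ with the supremum norm. For a totally bounded subset $A$ of a metric space, the metric entropy $\mathcal H_\epsilon(A)$ is $\log_2$ of the minimal number $k$ of points $F_1,\dots,F_k\in A$ such that every point of $A$ is within distance $\epsilon$ of some $F_i$ (here the metric is that of $C(\mathbf X)$). $\log$ denotes $\log_2$. *)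

From HB Require Import structures.
From mathcomp Require Import all_boot all_order all_algebra.
From mathcomp Require Import all_classical all_reals all_analysis.
Set Implicit Arguments. Unset Strict Implicit. Unset Printing Implicit Defensive.
Import Order.TTheory GRing.Theory Num.Theory.
Import numFieldNormedType.Exports.
Local Open Scope classical_set_scope.
Local Open Scope ring_scope.

Definition log2 {R : realType} (x : R) : R := ln x / ln 2.

Definition bcont {R : realType} {X : topologicalType} (f : X -> R) : Prop :=
  continuous f /\ exists M : R, forall x, `|f x| <= M.

(* distance in C(X) (sup norm) at most eps, written out pointwise *)
Definition within_dist {R : realType} {X : topologicalType}
  (f g : X -> R) (eps : R) : Prop := forall x, `|f x - g x| <= eps.

Definition eps_net {R : realType} {X : topologicalType}
  (A : set (X -> R)) (eps : R) (s : seq (X -> R)) : Prop :=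
  (forall g, g \in s -> A g) /\
  (forall f, A f -> exists2 g, g \in s & within_dist f g eps).

Definition covering_number {R : realType} {X : topologicalType}
  (A : set (X -> R)) (eps : R) : R :=
  inf [set (size s)%:R | s in eps_net A eps].

Definition metric_entropy {R : realType} {X : topologicalType}
  (A : set (X -> R)) (eps : R) : R := log2 (covering_number A eps).

(* A Predictor strategy: maps the history ((x_1,y_1),...,(x_{n-1},y_{n-1}))
   and the current signal x_n to the prediction mu_n. *)
Definition strategy (R : realType) (X : topologicalType) : Type :=
  seq (X * R) -> X -> R.

(* the history of the first n rounds (0-indexed sequences) *)
Definition history {R : realType} {X : topologicalType}
  (xs : nat -> X) (ys : nat -> R) (n : nat) : seq (X * R) :=
  [seq (xs j, ys j) | j <- iota 0 n].

Definition prediction {R : realType} {X : topologicalType} (S : strategy R X)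
  (xs : nat -> X) (ys : nat -> R) (n : nat) : R :=
  S (history xs ys n) (xs n).

Definition entropy_bound {R : realType} {X : topologicalType}
  (A : set (X -> R)) (N : nat) : R :=
  inf [set metric_entropy A eps + log2 (log2 eps^-1) + eps * N%:R + 1
      | eps in `]0, 2^-1]%classic].

From HB Require Import structures.
From mathcomp Require Import all_boot all_order all_algebra.
From mathcomp Require Import all_classical all_reals all_analysis.
From mathcomp Require Import ring lra.

(* Predictor runs exponential weights with learning rate 1/32, for which the
   square loss on [-1, 1] is exp-concave, over the experts (k, i): the clipped
   elements i of a minimal 2^-k-net of the class, with prior 1/(k(k+1)) on
   level k spread evenly over its net. Infinitely many levels cannot be mixed,
   so level k sleeps until round log2 k and is charged the master's own loss
   meanwhile; this keeps the weighted mean of all forecasts equal to the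
   master's prediction, and exp-concavity then shows that the total weight
   never exceeds exp(-loss of the master / 32). Hence the master loses at
   most 32 ln(1/prior) more than any expert. Against F in the class take the
   net element closest to F at the scale 2^-k ~ eps: it loses at most 4 eps
   per round more than F, plus 4 per sleeping round, and its log-prior costs
   about 2 log2 k + H_eps with k ~ log2 (1/eps). *)

Set Implicit Arguments.
Unset Strict Implicit.
Unset Printing Implicit Defensive.

Import Order.TTheory GRing.Theory Num.Theory.
Import numFieldNormedType.Exports.
Local Open Scope classical_set_scope.
Local Open Scope ring_scope.

Section SquareLoss.
Variable R : realType.

Lemma expR_le_inv1B (s : R) : s < 1 -> expR s <= (1 - s)^-1.
Proof.
move=> s1; have es := expR_ge1Dx (- s).
rewrite -[s]opprK expRN lef_pV2 ?posrE ?expR_gt0 //; lra.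
Qed.

Definition eta : R := 32^-1.

(* The tangent-line form of the eta-exp-concavity of the square loss on
   [-1, 1]: averaged over forecasts b with mean m, the linear term vanishes. *)
Lemma sqloss_exp_concave (y b m : R) :
  -1 <= y <= 1 -> -1 <= b <= 1 -> -1 <= m <= 1 ->
  expR (- eta * (y - b) ^+ 2) <=
  expR (- eta * (y - m) ^+ 2) * (1 + 2 * eta * (y - m) * (b - m)).
Proof.
move=> /andP[y1 y2] /andP[b1 b2] /andP[m1 m2].
have -> : - eta * (y - b) ^+ 2 =
    - eta * (y - m) ^+ 2 + ((y - m) * (b - m) / 16 - (b - m) ^+ 2 / 32).
  by rewrite /eta; field.
have -> : 2 * eta * (y - m) * (b - m) = (y - m) * (b - m) / 16.
  by rewrite /eta; field.
rewrite expRD ler_pM2l ?expR_gt0 //.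
set u := y - m; set d := b - m.
have [u1 u2] : -2 <= u /\ u <= 2 by rewrite /u; split; lra.
have [d1 d2] : -2 <= d /\ d <= 2 by rewrite /d; split; lra.
have s1 : u * d / 16 - d ^+ 2 / 32 < 1 by nra.
apply: (le_trans (expR_le_inv1B s1)).
rewrite -[X in X <= _]mul1r ler_pdivrMr; last by lra.
have ud1 : u * d <= 4 by nra.
have ud2 : -4 <= u * d by nra.
have uu : u ^+ 2 <= 4 by nra.
nra.
Qed.

Lemma sqr_sub_le4 (y m : R) : -1 <= y <= 1 -> -1 <= m <= 1 -> (y - m) ^+ 2 <= 4.
Proof. by move=> /andP[y1 y2] /andP[m1 m2]; nra. Qed.

Lemma sqr_sub_lipschitz (y a c e : R) :
  -1 <= y <= 1 -> -1 <= a <= 1 -> -1 <= c <= 1 -> `|c - a| <= e ->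
  (y - a) ^+ 2 <= (y - c) ^+ 2 + 4 * e.
Proof.
move=> /andP[y1 y2] /andP[a1 a2] /andP[c1 c2] ca.
have -> : (y - a) ^+ 2 = (y - c) ^+ 2 + (c - a) * (2 * y - a - c) by ring.
rewrite lerD2l mulrC; apply: (le_trans (ler_norm _)); rewrite normrM.
by apply: ler_pM => //; rewrite ler_norml; apply/andP; split; lra.
Qed.

Definition clip (t : R) : R := if t < -1 then -1 else if 1 < t then 1 else t.

Lemma clip_bd t : -1 <= clip t <= 1.
Proof.
by rewrite /clip; case: ltP => t1; [|case: ltP => t2]; apply/andP; split; lra.
Qed.

Lemma clip_lipschitz s t : `|clip s - clip t| <= `|s - t|.
Proof.
have st1 := ler_norm (s - t).
have st2 : t - s <= `|s - t| by rewrite distrC ler_norm.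
rewrite /clip; case: (ltP s (-1)) => s1; case: (ltP 1 s) => s2;
  case: (ltP t (-1)) => t1; case: (ltP 1 t) => t2;
  rewrite ler_norml; apply/andP; split; lra.
Qed.

Lemma sqr_sub_clip y t : -1 <= y <= 1 -> (y - clip t) ^+ 2 <= (y - t) ^+ 2.
Proof.
move=> /andP[y1 y2]; rewrite /clip.
by case: (ltP t (-1)) => t1 /=; [|case: (ltP 1 t) => t2 /=]; nra.
Qed.

End SquareLoss.

Section Log2.
Variable R : realType.

Lemma ln2_gt0 : 0 < ln (2 : R).
Proof. by apply: ln_gt0; lra. Qed.

Lemma ln2_le1 : ln (2 : R) <= 1.
Proof.
have e2 := expR_ge1Dx (1 : R).
rewrite -[X in _ <= X](expRK 1) ler_ln ?posrE ?expR_gt0 //; lra.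
Qed.

Lemma ler_log2 (x y : R) : 0 < x -> x <= y -> log2 x <= log2 y.
Proof.
move=> x0 xy; rewrite /log2 ler_pM2r ?invr_gt0 ?ln2_gt0 //.
by rewrite ler_ln ?posrE // (lt_le_trans x0).
Qed.

Lemma log2_ge0 (x : R) : 1 <= x -> 0 <= log2 x.
Proof. by move=> x1; rewrite /log2 divr_ge0 ?ln_ge0 // ler1n. Qed.

Lemma log2M (x y : R) : 0 < x -> 0 < y -> log2 (x * y) = log2 x + log2 y.
Proof. by move=> x0 y0; rewrite /log2 lnM ?posrE // mulrDl. Qed.

Lemma log2_exp2 (n : nat) : log2 ((2 : R) ^+ n) = n%:R.
Proof.
by rewrite /log2 lnXn // -(mulr_natr (ln 2)) mulrAC divff ?mul1r // gt_eqF ?ln2_gt0.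
Qed.

Lemma log2_2 : log2 (2 : R) = 1.
Proof. by rewrite -[2 in LHS]expr1 log2_exp2. Qed.

Lemma ln_le_log2 (x : R) : 1 <= x -> ln x <= log2 x.
Proof.
move=> x1; have l0 := log2_ge0 x1.
have -> : ln x = ln 2 * log2 x by rewrite /log2 mulrC divfK // gt_eqF ?ln2_gt0.
by rewrite ler_piMl // ln2_le1.
Qed.

Lemma log2_up_log_le (k : nat) :
  (0 < k)%N -> (up_log 2 k)%:R <= 1 + log2 (k%:R : R).
Proof.
move=> k0; have k1 : 1 <= k%:R :> R by rewrite ler1n.
have ek : (2 ^ up_log 2 k <= 2 * k)%N.
  case: (ltnP 1 k) => k2.
    have u0 : (0 < up_log 2 k)%N by rewrite up_log_gt0 k2.
    have := up_log_gtn (isT : (1 < 2)%N) k2.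
    by rewrite -(prednK u0) expnS leq_mul2l /= => /ltnW.
  by have -> : k = 1%N by apply/eqP; rewrite eqn_leq k2.
apply: (@le_trans _ _ (log2 (2 * k%:R))).
  by rewrite -(log2_exp2 (up_log 2 k)) ler_log2 ?exprn_gt0 // -natrX -natrM ler_nat.
by rewrite log2M ?ltr0n // log2_2.
Qed.

Lemma log2_prior_le (k m : nat) : (0 < k)%N -> (0 < m)%N ->
  log2 ((k * k.+1)%:R * m%:R : R) <= 1 + 2 * log2 (k%:R : R) + log2 (m%:R : R).
Proof.
move=> k0 m0; have k1 : 1 <= k%:R :> R by rewrite ler1n.
have kpos : 0 < k%:R :> R by rewrite ltr0n.
have kk : (k * k.+1)%:R <= 2 * k%:R * k%:R :> R.
  by rewrite natrM -addn1 natrD; nra.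
rewrite log2M ?ltr0n ?muln_gt0 ?k0 // lerD2r.
apply: (le_trans (ler_log2 _ kk)); first by rewrite ltr0n muln_gt0 k0.
rewrite -mulrA !log2M ?mulr_gt0 // log2_2.
lra.
Qed.

Lemma log2_le_log2_log2 (k : nat) (x : R) : (0 < k)%N -> (2 : R) ^+ k <= x ->
  log2 (k%:R : R) <= log2 (log2 x).
Proof.
move=> k0 kx; apply: ler_log2; first by rewrite ltr0n.
by rewrite -log2_exp2 ler_log2 ?exprn_gt0.
Qed.

Lemma dyadic_level (eps : R) : 0 < eps -> eps <= 2^-1 ->
  exists2 k, (0 < k)%N & (2 : R) ^+ k <= eps^-1 < (2 : R) ^+ k.+1.
Proof.
move=> e0 e2; have x2 : 2 <= eps^-1 by rewrite -[2]invrK lef_pV2 ?posrE ?invr_gt0.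
pose P n := eps^-1 < (2 : R) ^+ n.
have exP : exists n, P n.
  exists (Num.Def.archi_bound eps^-1).
  apply: (lt_le_trans (archi_boundP _)); first by rewrite invr_ge0 ltW.
  by rewrite -natrX ler_nat ltnW // ltn_expl.
case: (ex_minnP exP) => -[|[|k]]; rewrite /P ?expr0 ?expr1 => Pn nmin; try lra.
exists k.+1 => //; rewrite Pn andbT leNgt; apply/negP => /nmin.
by rewrite ltnn.
Qed.

Lemma inv_exp2_le (k : nat) (eps : R) : 0 < eps -> eps^-1 < (2 : R) ^+ k.+1 ->
  ((2 : R) ^+ k)^-1 <= 2 * eps.
Proof.
move=> e0 ek.
have : (2 * 2 ^+ k)^-1 < eps.
  rewrite -[X in _ < X]invrK ltf_pV2 ?posrE ?invr_gt0 ?mulr_gt0 ?exprn_gt0 //.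
  by rewrite -exprS.
rewrite invfM => ek2.
have -> : ((2 : R) ^+ k)^-1 = 2 * (2^-1 * ((2 : R) ^+ k)^-1).
  by rewrite mulrA divff ?mul1r.
by rewrite ler_pM2l // ltW.
Qed.

End Log2.

Section NestedSums.
Variable R : realType.
Implicit Types (f g : nat -> nat -> R) (m : nat -> nat).

Lemma nested_sum_ge_term f m a b k i :
  (forall k i, 0 <= f k i) -> (a <= k < b)%N -> (i < m k)%N ->
  f k i <= \sum_(a <= k' < b) \sum_(0 <= i' < m k') f k' i'.
Proof.
move=> f0 kab im.
have fi : f k i <= \sum_(0 <= i' < m k) f k i'.
  by rewrite (bigD1_seq i) ?mem_index_iota ?iota_uniq //= lerDl sumr_ge0.
apply: (le_trans fi).
rewrite [X in _ <= X](bigD1_seq k) ?mem_index_iota ?iota_uniq //=.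
by rewrite lerDl sumr_ge0 // => k' _; apply: sumr_ge0.
Qed.

Lemma nested_sumD_scale f g m (al be : R) a b :
  \sum_(a <= k < b) \sum_(0 <= i < m k) (al * f k i + be * g k i) =
  al * \sum_(a <= k < b) \sum_(0 <= i < m k) f k i +
  be * \sum_(a <= k < b) \sum_(0 <= i < m k) g k i.
Proof.
rewrite !mulr_sumr -big_split; apply: eq_bigr => k _.
by rewrite !mulr_sumr -big_split.
Qed.

Lemma sum_inv_mulnS (K : nat) :
  \sum_(1 <= k < K.+1) ((k * k.+1)%:R)^-1 = 1 - (K.+1)%:R^-1 :> R.
Proof.
elim: K => [|K IH]; first by rewrite big_geq // invr1 subrr.
have K0 : 0 <= K%:R :> R by rewrite ler0n.
rewrite big_nat_recr //= IH natrM.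
have -> : K.+1%:R = K%:R + 1 :> R by rewrite -addn1 natrD.
have -> : K.+2%:R = K%:R + 2 :> R by rewrite -addn2 natrD.
by field; apply/andP; split; rewrite lt0r_neq0 //; lra.
Qed.

Lemma sum_nat_lt_le (N n0 : nat) : \sum_(j < N) ((j < n0)%N)%:R <= n0%:R :> R.
Proof.
suff : \sum_(j < N) ((j < n0)%N)%:R <= (minn N n0)%:R :> R.
  by move/le_trans; apply; rewrite ler_nat geq_minr.
elim: N => [|N IH]; first by rewrite big_ord0 min0n.
rewrite big_ord_recr /=; case: (ltnP N n0) => Nn0.
  move: IH; rewrite (minn_idPl Nn0) (minn_idPl (ltnW Nn0)) -addn1 natrD.
  by move=> IH; apply: lerD.
rewrite addr0 (le_trans IH) // ler_nat leq_min geq_minr andbT.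
exact: leq_trans (geq_minl N n0) (leqnSn N).
Qed.

End NestedSums.

(* [compact_cover] needs a pointed space; declaring this instance is what
   makes the sup-norm function space a [ptopologicalType]. *)
HB.instance Definition _ (R : realType) (X : topologicalType) :=
  isPointed.Build {uniform X -> R} (fun _ => 0).

Section Nets.
Variables (R : realType) (X : topologicalType) (FF : set (X -> R)).

Lemma eps_net_le (e e' : R) (s : seq (X -> R)) :
  eps_net FF e s -> e <= e' -> eps_net FF e' s.
Proof.
move=> [sFF FFs] ee'; split=> // f /FFs[g gs fg]; exists g => // x.
exact: le_trans (fg x) ee'.
Qed.

Hypothesis FF_compact : compact (FF : set {uniform X -> R}).

Lemma compact_eps_net (e : R) : 0 < e -> exists s, eps_net FF e s.
Proof.
move=> e0.
have FFcover : cover_compact (FF : set {uniform X -> R}) by rewrite -compact_cover.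
pose U (g : {uniform X -> R}) :=
  interior [set h : {uniform X -> R} | forall x, `|g x - h x| < e].
have U_open i : FF i -> open (U i) by move=> _; exact: open_interior.
have FF_U : FF `<=` cover FF U.
  move=> g FFg; exists g => //; apply/uniform_nbhs.
  exists [set gh | ball gh.1 e gh.2].
  split; first exact: (@entourage_ball _ _ (PosNum e0)).
  by move=> h /= gh x; have := gh x I; rewrite -ball_normE.
have [D DFF FF_D] := FFcover _ FF U U_open FF_U.
exists (finmap.enum_fset D); split=> [g gD|f FFf].
  by have := DFF _ gD; rewrite inE.
have [g gD Ugf] := FF_D _ FFf; exists g => // x.
by rewrite distrC; apply/ltW/(interior_subset Ugf).
Qed.

Lemma compact_min_eps_net (e : R) : 0 < e ->
  exists s, eps_net FF e s /\ forall s', eps_net FF e s' -> (size s <= size s')%N.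
Proof.
move=> e0; pose P n := `[< exists s, eps_net FF e s /\ size s = n >].
have [n Pn] : exists n, P n.
  by have [s es] := compact_eps_net e0; exists (size s); apply/asboolP; exists s.
case: (ex_minnP (ex_intro P n Pn)) => _ /asboolP[s [es <-]] smin.
by exists s; split => // s' es'; apply: smin; apply/asboolP; exists s'.
Qed.

Lemma min_eps_net_size_le (e e' : R) (s : seq (X -> R)) :
  0 < e -> e <= e' ->
  (forall s', eps_net FF e' s' -> (size s <= size s')%N) ->
  (size s)%:R <= covering_number FF e.
Proof.
move=> e0 ee' smin; apply: lb_le_inf.
  by have [s' es'] := compact_eps_net e0; exists (size s')%:R, s'.
by move=> _ [s' es' <-]; rewrite ler_nat; apply/smin/(eps_net_le es').
Qed.

End Nets.

Section AggregatingAlgorithm.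
Variables (R : realType) (X : topologicalType) (net : nat -> seq (X -> R)).

Definition prior (k : nat) : R := ((k * k.+1)%:R * (size (net k))%:R)^-1.

Definition expert (k i : nat) (x : X) : R := clip (nth (fun=> 0) (net k) i x).

Definition awake (n k : nat) : bool := (1 <= k <= 2 ^ n)%N.

Definition weight (V : nat -> nat -> R) (k i : nat) : R :=
  prior k * expR (- eta R * V k i).

Definition mass V n : R :=
  \sum_(1 <= k < (2 ^ n).+1) \sum_(0 <= i < size (net k)) weight V k i.

Definition mixture V n x : R :=
  \sum_(1 <= k < (2 ^ n).+1) \sum_(0 <= i < size (net k))
    weight V k i * expert k i x.

Definition aa_predict V n x : R := mixture V n x / mass V n.

Definition aa_update V n (p : X * R) : nat -> nat -> R := fun k i =>
  V k i + (if awake n k then (p.2 - expert k i p.1) ^+ 2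
           else (p.2 - aa_predict V n p.1) ^+ 2).

Definition aa_state (h : seq (X * R)) : (nat -> nat -> R) * nat :=
  foldl (fun st p => (aa_update st.1 st.2 p, st.2.+1)) (fun _ _ => 0, 0%N) h.

Definition aa_strategy : strategy R X :=
  fun h x => aa_predict (aa_state h).1 (aa_state h).2 x.

Lemma expert_bd k i x : -1 <= expert k i x <= 1.
Proof. exact: clip_bd. Qed.

Lemma weight_ge0 V k i : 0 <= weight V k i.
Proof. by rewrite mulr_ge0 ?expR_ge0 // invr_ge0 mulr_ge0. Qed.

Lemma normr_mixture_le V n x : `|mixture V n x| <= mass V n.
Proof.
apply: (le_trans (ler_norm_sum _ _ _)); apply: ler_sum => k _.
apply: (le_trans (ler_norm_sum _ _ _)); apply: ler_sum => i _.
rewrite normrM ger0_norm ?weight_ge0 // ler_piMr ?weight_ge0 //.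
by rewrite ler_norml expert_bd.
Qed.

Lemma aa_predict_bd V n x : -1 <= aa_predict V n x <= 1.
Proof.
rewrite -ler_norml /aa_predict.
have [->|m0] := eqVneq (mass V n) 0; first by rewrite invr0 mulr0 normr0.
have m_gt0 : 0 < mass V n.
  rewrite lt_def m0 /=; apply: sumr_ge0 => k _; apply: sumr_ge0 => i _.
  exact: weight_ge0.
by rewrite normrM normfV (gtr0_norm m_gt0) ler_pdivrMr // mul1r normr_mixture_le.
Qed.

Hypothesis net_neq0 : forall k, (0 < size (net k))%N.

Lemma mass_gt0 V n : 0 < mass V n.
Proof.
have w0 : 0 < weight V 1 0.
  by rewrite mulr_gt0 ?expR_gt0 // invr_gt0 mulr_gt0 ?ltr0n.
apply: (lt_le_trans w0); apply: nested_sum_ge_term => //.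
- exact: weight_ge0.
- by rewrite /= ltnS expn_gt0.
Qed.

Section Play.
Variables (xs : nat -> X) (ys : nat -> R).

Fixpoint cumloss (n : nat) : nat -> nat -> R :=
  if n is n'.+1 then aa_update (cumloss n') n' (xs n', ys n') else fun _ _ => 0.

Definition master (n : nat) : R := aa_predict (cumloss n) n (xs n).

Definition master_loss (N : nat) : R := \sum_(n < N) (ys n - master n) ^+ 2.

Definition potential (n K : nat) : R :=
  \sum_(1 <= k < K.+1) \sum_(0 <= i < size (net k)) weight (cumloss n) k i.

Definition forecast (n k i : nat) : R :=
  if awake n k then expert k i (xs n) else master n.

Lemma aa_state_history n : aa_state (history xs ys n) = (cumloss n, n).
Proof.
elim: n => [//|n]; rewrite /aa_state => IH.
rewrite /history -addn1 iotaD map_cat foldl_cat -/(history xs ys n) IH.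
by rewrite add0n addn1.
Qed.

Lemma prediction_aa_strategy n : prediction aa_strategy xs ys n = master n.
Proof. by rewrite /prediction /aa_strategy aa_state_history. Qed.

Lemma master_bd n : -1 <= master n <= 1.
Proof. exact: aa_predict_bd. Qed.

Lemma cumlossS n k i :
  cumloss n.+1 k i = cumloss n k i + (ys n - forecast n k i) ^+ 2.
Proof. by rewrite /= /aa_update /forecast; case: awake. Qed.

Lemma cumlossE N k i : cumloss N k i = \sum_(n < N) (ys n - forecast n k i) ^+ 2.
Proof.
by elim: N => [|N IH]; rewrite ?big_ord0 // cumlossS big_ord_recr /= IH.
Qed.

Lemma potential0_le1 K : potential 0 K <= 1.
Proof.
have -> : potential 0 K = \sum_(1 <= k < K.+1) ((k * k.+1)%:R)^-1.
  apply: eq_bigr => k _; rewrite /weight /= mulr0 expR0.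
  under eq_bigr do rewrite mulr1.
  rewrite sumr_const_nat subn0 /prior invfM -mulrnAr -(mulr_natl _ (size (net k))).
  by rewrite mulfV ?mulr1 // pnatr_eq0 -lt0n.
by rewrite sum_inv_mulnS gerBl invr_ge0.
Qed.

(* The master prediction is the weighted mean of the forecasts: the awake
   ones average to it by definition, the sleeping ones are equal to it. *)
Lemma forecast_centered n K : (2 ^ n <= K)%N ->
  \sum_(1 <= k < K.+1) \sum_(0 <= i < size (net k))
    weight (cumloss n) k i * (forecast n k i - master n) = 0.
Proof.
move=> nK; rewrite (big_cat_nat _ (n := (2 ^ n).+1)) //=.
rewrite [X in _ + X]big1_seq ?addr0 => [|k]; last first.
  rewrite mem_index_iota => /andP[_ /andP[kn _]]; rewrite big1 // => i _.
  by rewrite /forecast /awake (leqNgt k) kn andbF subrr mulr0.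
have -> : \sum_(1 <= k < (2 ^ n).+1) \sum_(0 <= i < size (net k))
    weight (cumloss n) k i * (forecast n k i - master n) =
  \sum_(1 <= k < (2 ^ n).+1) \sum_(0 <= i < size (net k))
    (1 * (weight (cumloss n) k i * expert k i (xs n)) +
     (- master n) * weight (cumloss n) k i).
  apply: eq_big_nat => k kn; apply: eq_bigr => i _.
  by rewrite /forecast /awake kn; ring.
rewrite nested_sumD_scale mul1r -/(mixture _ _ _) -/(mass _ _).
by rewrite /master /aa_predict mulNr divfK ?subrr // gt_eqF ?mass_gt0.
Qed.

Hypothesis ys_bd : forall n, -1 <= ys n <= 1.

Lemma potential_step n K : (2 ^ n <= K)%N ->
  potential n.+1 K <= expR (- eta R * (ys n - master n) ^+ 2) * potential n K.
Proof.
move=> nK; set E := expR _; set c := 2 * eta R * (ys n - master n).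
have weightS k i : weight (cumloss n.+1) k i <=
    E * weight (cumloss n) k i +
    E * c * (weight (cumloss n) k i * (forecast n k i - master n)).
  rewrite /weight cumlossS mulrDr expRD mulrA -/(weight _ k i).
  have -> : E * weight (cumloss n) k i +
      E * c * (weight (cumloss n) k i * (forecast n k i - master n)) =
    weight (cumloss n) k i * (E * (1 + c * (forecast n k i - master n))).
    by ring.
  rewrite ler_wpM2l ?weight_ge0 //.
  apply: sqloss_exp_concave (ys_bd n) _ (master_bd n).
  by rewrite /forecast; case: awake; rewrite ?expert_bd ?master_bd.
apply: (le_trans (ler_sum _ (fun k _ => ler_sum _ (fun i _ => weightS k i)))).
by rewrite nested_sumD_scale forecast_centered // mulr0 addr0.
Qed.

Lemma potential_le n K : (2 ^ n <= K)%N ->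
  potential n K <= expR (- eta R * master_loss n).
Proof.
elim: n => [|n IH] nK.
  by rewrite /master_loss big_ord0 mulr0 expR0 potential0_le1.
have nK' : (2 ^ n <= K)%N by apply: leq_trans nK; rewrite expnS leq_pmull.
apply: (le_trans (potential_step nK')).
rewrite /master_loss big_ord_recr /= mulrDr expRD mulrC ler_wpM2r ?expR_ge0 //.
exact: IH.
Qed.

Lemma master_loss_le_cumloss N K k i : (2 ^ N <= K)%N -> (1 <= k <= K)%N ->
  (i < size (net k))%N ->
  master_loss N <= cumloss N k i + 32 * ln ((k * k.+1)%:R * (size (net k))%:R).
Proof.
move=> NK kK ik.
have wP : weight (cumloss N) k i <= potential N K.
  by apply: nested_sum_ge_term => // *; exact: weight_ge0.
have := le_trans wP (potential_le NK).
set P : R := (k * k.+1)%:R * (size (net k))%:R.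
have P0 : 0 < P.
  by rewrite mulr_gt0 ?ltr0n ?net_neq0 // muln_gt0 andbT; case/andP: kK.
rewrite /weight /prior -/P -{1}(lnK P0) -expRN -expRD ler_expR /eta.
lra.
Qed.

Lemma cumloss_le_comparator N k i (F : X -> R) (e : R) : (0 < k)%N ->
  within_dist F (nth (fun=> 0) (net k) i) e ->
  cumloss N k i <= \sum_(n < N) (ys n - F (xs n)) ^+ 2 + 4 * e * N%:R +
                   4 * (up_log 2 k)%:R.
Proof.
move=> k0 Fg; have e0 : 0 <= e := le_trans (normr_ge0 _) (Fg (xs 0)).
rewrite cumlossE; apply: (@le_trans _ _ (\sum_(n < N)
    ((ys n - F (xs n)) ^+ 2 + 4 * e + 4 * ((n < up_log 2 k)%N)%:R))).
  apply: ler_sum => n _; have n0 : 0 <= ((n < up_log 2 k)%N)%:R :> R by [].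
  rewrite /forecast; case: ifP => [_|asleep].
    have Fe : `|clip (F (xs n)) - expert k i (xs n)| <= e.
      exact: le_trans (clip_lipschitz _ _) (Fg _).
    have := sqr_sub_lipschitz (ys_bd n) (expert_bd k i (xs n)) (clip_bd _) Fe.
    have := sqr_sub_clip (F (xs n)) (ys_bd n).
    lra.
  have nk : (n < up_log 2 k)%N.
    move/negbT: asleep; rewrite /awake k0 /= -ltnNge => kn.
    by rewrite -(ltn_exp2l _ _ (isT : (1 < 2)%N)) (leq_trans kn) // up_logP.
  rewrite nk /=; have := sqr_sub_le4 (ys_bd n) (master_bd n).
  have := sqr_ge0 (ys n - F (xs n)); lra.
rewrite !big_split /= sumr_const card_ord -mulr_sumr (mulr_natr (4 * e)) lerD2l.
by rewrite ler_wpM2l // sum_nat_lt_le.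
Qed.

End Play.
End AggregatingAlgorithm.

Section EntropyRegret.
Variables (R : realType) (X : topologicalType) (FF : set (X -> R)).
Variable net : nat -> seq (X -> R).
Hypothesis FF_compact : compact (FF : set {uniform X -> R}).
Hypothesis net_min : forall k,
  eps_net FF ((2 : R) ^+ k)^-1 (net k) /\
  forall s, eps_net FF ((2 : R) ^+ k)^-1 s -> (size (net k) <= size s)%N.
Hypothesis net_neq0 : forall k, (0 < size (net k))%N.
Variables (xs : nat -> X) (ys : nat -> R).
Hypothesis ys_bd : forall n, -1 <= ys n <= 1.

Lemma master_loss_le_entropy N F eps : FF F -> 0 < eps -> eps <= 2^-1 ->
  master_loss net xs ys N <= \sum_(n < N) (ys n - F (xs n)) ^+ 2 +
    68 * (metric_entropy FF eps + log2 (log2 eps^-1) + eps * N%:R + 1).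
Proof.
move=> FFF e0 e2; have [k k0 /andP[ke ke1]] := dyadic_level e0 e2.
set ek := ((2 : R) ^+ k)^-1; have [g gk Fg] := (net_min k).1.2 F FFF.
have ik : (index g (net k) < size (net k))%N by rewrite index_mem.
have Fi : within_dist F (nth (fun=> 0) (net k) (index g (net k))) ek.
  by rewrite nth_index.
have kK : (1 <= k <= maxn (2 ^ N) k)%N by rewrite k0 leq_maxr.
have := master_loss_le_cumloss net_neq0 xs ys_bd (leq_maxl _ _) kK ik.
have := cumloss_le_comparator xs ys_bd N k0 Fi.
set P : R := (k * k.+1)%:R * (size (net k))%:R.
have P1 : 1 <= P by rewrite /P -natrM ler1n !muln_gt0 k0 net_neq0.
have lnP := ln_le_log2 P1.
have logP := log2_prior_le R k0 (net_neq0 k).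
have logk := log2_le_log2_log2 k0 ke.
have logk0 : 0 <= log2 (k%:R : R) by rewrite log2_ge0 // ler1n.
have upk := log2_up_log_le R k0.
have logm0 : 0 <= log2 ((size (net k))%:R : R) by rewrite log2_ge0 // ler1n.
have logm : log2 ((size (net k))%:R : R) <= metric_entropy FF eps.
  apply: ler_log2; first by rewrite ltr0n.
  have epsk : eps <= ek by rewrite -[eps]invrK lef_pV2 ?posrE ?invr_gt0.
  exact (min_eps_net_size_le FF_compact e0 epsk (net_min k).2).
have ekN : ek * N%:R <= 2 * eps * N%:R.
  by apply: ler_wpM2r; [rewrite ler0n | exact: inv_exp2_le].
have epsN : 0 <= eps * N%:R by rewrite mulr_ge0 ?ler0n ?(ltW e0).
lra.
Qed.

End EntropyRegret.

Theorem theorem2 (R : realType) :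
  exists C : R, forall (X : topologicalType), (exists x : X, True) ->
  forall (FF : set (X -> R)),
    (forall F, FF F -> bcont F) ->
    compact (FF : set {uniform X -> R}) ->
  exists S : strategy R X,
    forall (xs : nat -> X) (ys : nat -> R),
      (forall n, -1 <= ys n <= 1) ->
      (forall n, `|prediction S xs ys n| <= 1) /\
      (forall (N : nat), (0 < N)%N -> forall F, FF F ->
        \sum_(n < N) (ys n - prediction S xs ys n) ^+ 2 <=
        \sum_(n < N) (ys n - F (xs n)) ^+ 2 + C * entropy_bound FF N).
Proof.
exists 68 => X _ FF _ FF_compact.
have [[F0 FF0]|FF0] := pselect (exists F, FF F); last first.
  exists (fun _ _ => 0) => xs ys _; split=> [n|N _ F FFF].
    by rewrite /prediction normr0.
  by case: FF0; exists F.
have exp2_gt0 k : 0 < ((2 : R) ^+ k)^-1 by rewrite invr_gt0 exprn_gt0.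
have [net net_min] := choice (fun k => compact_min_eps_net FF_compact (exp2_gt0 k)).
have net_neq0 k : (0 < size (net k))%N.
  by have [g gk _] := (net_min k).1.2 F0 FF0; case: (net k) gk.
exists (aa_strategy net) => xs ys ys_bd; split=> [n|N _ F FFF].
  by rewrite prediction_aa_strategy ler_norml master_bd.
under eq_bigr do rewrite prediction_aa_strategy.
rewrite -/(master_loss _ _ _ _) addrC -lerBlDr mulrC -ler_pdivrMr //.
apply: lb_le_inf.
  exists (metric_entropy FF 2^-1 + log2 (log2 (2^-1)^-1) + 2^-1 * N%:R + 1).
  by exists 2^-1 => //=; rewrite in_itv /= lexx andbT invr_gt0.
move=> _ [eps + <-]; rewrite /= in_itv /= => /andP[e0 e2].
rewrite ler_pdivrMr // mulrC lerBlDr addrC.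
exact: master_loss_le_entropy.
Qed.
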